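(* Fix $k\in\mathbb{N}$, positive constants $b_0,b_1,b_2,\lambda_0,\lambda_1$ and $\mu\in(0,1)$. There exists $C>0$ depending only on $b_0,b_1,\lambda_0,\lambda_1,\mu$ (and the fixed $k$) such that the following holds. Let $T\geq10$, $\ell<r$, $a^\pm\in\mathbb{R}^k$, $g:[\ell,r]\to\mathbb{R}$ Lipschitz with $g(\ell)=g(r)=0$, and $P\subset(\ell,\ell+T^{1/2})$ finite (with $P\subset(\ell,r)$). Suppose that $r-\ell\leq b_0T$, $|P|\leq b_0T$, $|g(x)-g(y)|\leq b_1T|x-y|$ for all $x,y$, $a^\pm_j-a^\pm_{j+1}\geq\lambda_0T^{1/2}$ for $j\in\{1,\dots,k-1\}$, $a^-_k-g(\ell)\geq\lambda_1T$, $a^+_k-g(r)\geq\lambda_1T$, $a^-_1-g(\ell)\leq b_2T^2$, $a^+_1-g(r)\leq b_2T^2$. Then $\mathbb{P}_{\mathrm{free}}(\mathsf{H})\geq C^{-1}e^{-CT^{5/2}}$.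
   Context: $\mathbb{P}_{\mathrm{free}}$ denotes the law of $k$ independent Brownian bridges (diffusion parameter one) $\mathcal{L}=(\mathcal{L}_1,\dots,\mathcal{L}_k)$ on $[\ell,r]$ with $\mathcal{L}_j(\ell)=a^-_j$, $\mathcal{L}_j(r)=a^+_j$. $\mathsf{H}$ is the event that $\mathcal{L}_j(p)-\mathcal{L}_{j+1}(p)\geq\mu\lambda_0T^{1/2}$ for all $p\in P$ and $j\in\{1,\dots,k-1\}$, and $\mathcal{L}_k(p)-g(p)\geq\mu\lambda_1T$ for all $p\in P$. *)

From HB Require Import structures.
From mathcomp Require Import all_boot all_order all_algebra.
From mathcomp Require Import all_classical all_reals all_analysis.
Set Implicit Arguments. Unset Strict Implicit. Unset Printing Implicit Defensive.
Import Order.TTheory GRing.Theory Num.Theory.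
Local Open Scope ring_scope.

Section BB.
Variable R : realType.

Definition heat (t y : R) : R := expR (- (y ^+ 2) / (2 * t)) / Num.sqrt (2 * pi * t).

(* A configuration: x j i = value of curve j (1 <= j <= k) at the i-th point of P. *)
Definition config := nat -> nat -> R.

Definition upd (x : config) (j i : nat) (y : R) : config :=
  fun j' i' => if (j' == j) && (i' == i) then y else x j' i'.

Fixpoint iint (s : seq (nat * nat)) (F : config -> \bar R) (x : config) : \bar R :=
  match s with
  | [::] => F x
  | (j, i) :: s' => (\int[@lebesgue_measure R]_(y in setT) iint s' F (upd x j i y))%E
  end.

Definition tgrid (l r : R) (P : seq R) (i : nat) : R :=
  if i == 0%N then l else if (i <= size P)%N then nth 0 P i.-1 else r.

(* Values of curve j on the grid: a^-_j, x j 0, ..., x j (m-1), a^+_j. *)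
Definition xgrid (P : seq R) (am ap : nat -> R) (x : config) (j i : nat) : R :=
  if i == 0%N then am j else if (i <= size P)%N then x j i.-1 else ap j.

(* Finite-dimensional density at the (strictly increasing) times P of a
   Brownian bridge (diffusion parameter 1) on [l,r] from am j to ap j. *)
Definition bridge_density (l r : R) (P : seq R) (am ap : nat -> R) (x : config) (j : nat) : R :=
  (\prod_(i < (size P).+1)
     heat (tgrid l r P i.+1 - tgrid l r P i) (xgrid P am ap x j i.+1 - xgrid P am ap x j i))
  / heat (r - l) (ap j - am j).

Definition eventH (k : nat) (mu lam0 lam1 T : R) (g : R -> R) (P : seq R) (x : config) : bool :=
  all (fun i =>
         all (fun j => mu * lam0 * Num.sqrt T <= x j i - x j.+1 i) (iota 1 k.-1)
         && (mu * lam1 * T <= x k i - g (nth 0 P i)))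
      (iota 0 (size P)).

Definition coords (k m : nat) : seq (nat * nat) :=
  flatten [seq [seq (j, i) | i <- iota 0 m] | j <- iota 1 k].

(* P_free(H): law of k independent Brownian bridges on [l,r] from a^- to a^+. *)
Definition Pfree_H (k : nat) (l r : R) (am ap : nat -> R) (mu lam0 lam1 T : R)
  (g : R -> R) (P : seq R) : \bar R :=
  iint (coords k (size P))
    (fun x => (if eventH k mu lam0 lam1 T g P x
               then \prod_(1 <= j < k.+1) bridge_density l r P am ap x j else 0)%:E)
    (fun _ _ => 0).

End BB.

(* The lower bound comes from a tube.  Let [Y_j] be the linear interpolation
   from [a^-_j] to [a^+_j] raised by the tent [b1 T * dist (t, {l, r})], and
   keep curve [j] within [d = eps sqrt T] of [Y_j] at every point of [P].  The
   targets are [lam0 sqrt T] apart and [lam1 T] above [g], which stays below the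
   tent, so for small [eps] the tube lies inside [H].  Integrating the bridge
   density one point at a time, completing the square in the Gaussian kernels
   shows that a window of width of order [sqrt dt] around the target at the next
   point carries at least [c exp (-4 (b1 T)^2 dt)] of the remaining mass, the
   exponential paying for the drift of the tent.  With at most [b0 T] points,
   all in [(l, l + sqrt T)], the tube has mass at least
   [c^(k b0 T) exp (-4 k b1^2 T^(5/2))]. *)

From HB Require Import structures.
From mathcomp Require Import all_boot all_order all_algebra.
From mathcomp Require Import all_classical all_reals all_analysis.
From mathcomp Require Import ring lra zify.
Set Implicit Arguments. Unset Strict Implicit. Unset Printing Implicit Defensive.
Import Order.TTheory GRing.Theory Num.Theory.
Local Open Scope ring_scope.
Local Open Scope classical_set_scope.

Section Tube.
Variable R : realType.

Lemma heat_gt0 (t y : R) : 0 < t -> 0 < heat t y.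
Proof.
move=> t0; rewrite /heat divr_gt0 ?expR_gt0 // sqrtr_gt0.
by rewrite mulr_gt0 // mulr_gt0 // pi_gt0.
Qed.

Lemma heat_ge0 (t y : R) : 0 <= heat t y.
Proof. by rewrite /heat divr_ge0 ?sqrtr_ge0 // ltW // expR_gt0. Qed.

(* The second factor is the density at [a], at time [t], of the bridge from [0]
   at time [0] to [a + b] at time [t + S]. *)
Lemma heat_mul (t S a b : R) : 0 < t -> 0 < S ->
  heat t a * heat S b =
  heat (t + S) (a + b) * heat (t * S / (t + S)) (a - t * (a + b) / (t + S)).
Proof.
move=> t0 S0; have tS0 : 0 < t + S by rewrite addr_gt0.
have pi0 := pi_gt0 R.
rewrite /heat mulf_div [in RHS]mulf_div -!expRD.
congr (expR _ / _); first by field; rewrite ?lt0r_neq0 ?mulr_gt0.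
rewrite -!sqrtrM ?mulr_ge0 ?ltW ?divr_gt0 ?mulr_gt0 //.
by congr Num.sqrt; field; rewrite lt0r_neq0.
Qed.

Lemma heat_ge_near_mean (s t L z : R) :
  0 < s -> s <= t -> 0 <= L -> `|z| <= Num.sqrt s + 2 * L * s ->
  expR (- 1 - 4 * L ^+ 2 * t) / (Num.sqrt (2 * pi) * Num.sqrt s) <= heat s z.
Proof.
move=> s0 st L0 hz; have pi0 := pi_gt0 R.
have ssq : Num.sqrt s ^+ 2 = s by rewrite sqr_sqrtr // ltW.
have hz2 : z ^+ 2 <= 2 * s + 8 * L ^+ 2 * s ^+ 2.
  have ub0 : 0 <= Num.sqrt s + 2 * L * s by apply: le_trans hz.
  move: hz; rewrite ler_norml => /andP [h1 h2].
  have := sqr_ge0 (Num.sqrt s - 2 * L * s); nra.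
rewrite /heat [Num.sqrt (2 * pi * s)]sqrtrM; last by rewrite mulr_ge0 // ltW.
apply: ler_wpM2r.
  by rewrite invr_ge0 mulr_ge0 ?sqrtr_ge0.
rewrite ler_expR mulNr.
suff : z ^+ 2 / (2 * s) <= 1 + 4 * L ^+ 2 * t by lra.
rewrite ler_pdivrMr ?mulr_gt0 //.
have : L ^+ 2 * s <= L ^+ 2 * t by rewrite ler_wpM2l ?sqr_ge0.
nra.
Qed.

Lemma heat_bridge_ge (t S X a y L : R) : 0 < t -> 0 < S -> 0 <= L ->
  `|y - (X + t * (a - X) / (t + S))| <=
    Num.sqrt (t * S / (t + S)) + 2 * L * (t * S / (t + S)) ->
  heat (t + S) (a - X) *
    (expR (- 1 - 4 * L ^+ 2 * t) / (Num.sqrt (2 * pi) * Num.sqrt (t * S / (t + S))))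
  <= heat t (y - X) * heat S (a - y).
Proof.
move=> t0 S0 L0 hy; have tS0 : 0 < t + S by rewrite addr_gt0.
rewrite heat_mul // (_ : y - X + (a - y) = a - X); last by ring.
apply: ler_wpM2l; first exact: heat_ge0.
apply: heat_ge_near_mean => //.
- by rewrite divr_gt0 ?mulr_gt0.
- rewrite ler_pdivrMr //; apply: ler_wpM2l; first exact: ltW.
  by rewrite lerDr ltW.
- by rewrite (_ : y - X - _ = y - (X + t * (a - X) / (t + S))) //; ring.
Qed.

(* No measurability of [f] is needed: the lower bound goes through the
   supremum over nonnegative simple functions below [f]. *)
Lemma integral_ge_itv (f : R -> \bar R) (a b c : R) :
  (forall y, (0 <= f y)%E) -> a < b -> 0 <= c ->
  (forall y, a <= y <= b -> (c%:E <= f y)%E) ->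
  ((c * (b - a))%:E <= \int[@lebesgue_measure R]_(y in setT) f y)%E.
Proof.
move=> f0 ab c0 fc.
have -> : ((c * (b - a))%:E = \int[@lebesgue_measure R]_(y in `[a, b]) (cst c%:E) y)%E.
  rewrite integral_cst //.
  by have := lebesgue_measure_itv `[a, b]%R; rewrite /= lte_fin ab => ->.
rewrite integral_mkcond !ge0_integralTE //; last first.
  by move=> y; rewrite /patch; case: ifP => // _; rewrite lee_fin.
apply: ereal_sup_le => _ [h /= hle <-]; exists h => //= y.
apply: le_trans (hle y) _; rewrite /patch; case: ifPn => [|_]; last exact: f0.
by rewrite inE /= in_itv /= => /fc.
Qed.

Lemma iint_cat (s1 s2 : seq (nat * nat)) (F : config R -> \bar R) x :
  iint s1 (iint s2 F) x = iint (s1 ++ s2) F x.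
Proof.
elim: s1 x => [//|[j i] s1 IH] x /=.
by congr (integral _ _ _); apply/funext => y; rewrite IH.
Qed.

Lemma iint_ge0 (s : seq (nat * nat)) (F : config R -> \bar R) x :
  (forall x, (0 <= F x)%E) -> (0 <= iint s F x)%E.
Proof.
move=> F0; elim: s x => [//|[j i] s IH] x /=.
by apply: integral_ge0 => y _; exact: IH.
Qed.

Lemma upd_eq (x : config R) j i y : upd x j i y j i = y.
Proof. by rewrite /upd !eqxx. Qed.

Lemma upd_neq_curve (x : config R) j i y j' i' :
  j' != j -> upd x j i y j' i' = x j' i'.
Proof. by rewrite /upd => /negbTE ->. Qed.

Lemma upd_neq_point (x : config R) j i y j' i' :
  i' != i -> upd x j i y j' i' = x j' i'.
Proof. by rewrite /upd => /negbTE ->; rewrite andbF. Qed.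

Section Grid.
Variables (l r : R) (P : seq R).
Hypotheses (lr : l < r) (sP : sorted <%R P) (Plr : forall p, p \in P -> l < p < r).

Lemma tgrid_last : tgrid l r P (size P).+1 = r.
Proof. by rewrite /tgrid /= ltnn. Qed.

Lemma tgrid_S i : (i < size P)%N -> tgrid l r P i.+1 = nth 0 P i.
Proof. by move=> iP; rewrite /tgrid /= iP. Qed.

Lemma tgrid_lt i : (i <= size P)%N -> tgrid l r P i < tgrid l r P i.+1.
Proof.
move=> iP; have nthP n : (n < size P)%N -> l < nth 0 P n < r by move=> ?; apply/Plr/mem_nth.
case: (ltnP i (size P)) => [im|mi]; last first.
  have -> : i = size P by apply/eqP; rewrite eqn_leq iP mi.
  rewrite tgrid_last; case eP: (size P) => [|m]; first by rewrite /tgrid.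
  by rewrite tgrid_S ?eP //; case/andP: (nthP m (ltac:(by rewrite eP))).
rewrite tgrid_S //; case: i im {iP} => [|i] im.
  by rewrite /tgrid /=; case/andP: (nthP 0%N im).
rewrite tgrid_S ?(ltnW im) //.
by apply: (sorted_ltn_nth lt_trans) => //; rewrite inE // ltnW.
Qed.

Lemma tgrid_ge i : (i <= (size P).+1)%N -> l <= tgrid l r P i.
Proof.
elim: i => [|i IH] iP; first by rewrite /tgrid.
by apply: le_trans (IH (ltnW iP)) _; apply/ltW/tgrid_lt.
Qed.

Lemma tgrid_span (h : R) : (forall p, p \in P -> p < l + h) -> 0 <= h ->
  0 <= tgrid l r P (size P) - tgrid l r P 0 <= h.
Proof.
move=> Ph h0; rewrite {2 4}/tgrid /= subr_ge0 tgrid_ge // andTb.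
case eP: (size P) => [|m]; first by rewrite /tgrid /= subrr.
have mP : (m < size P)%N by rewrite eP.
by rewrite tgrid_S //; have := Ph _ (mem_nth 0 mP); lra.
Qed.

End Grid.

Section BridgeChain.
Variables (l r : R) (P : seq R) (am ap : nat -> R).
Hypothesis lr : l < r.

(* The joint density of the first [i] grid values of the bridge of curve [j]. *)
Definition partial_density (x : config R) (j i : nat) : R :=
  (\prod_(i' < i) heat (tgrid l r P i'.+1 - tgrid l r P i')
                       (xgrid P am ap x j i'.+1 - xgrid P am ap x j i'))
  * heat (r - tgrid l r P i) (ap j - xgrid P am ap x j i) / heat (r - l) (ap j - am j).

Definition step_window (a1 : R) (B : R -> Prop) (kap : R) (i : nat) (X : R) :=
  exists a b, a < b /\ forall y, a <= y <= b -> B y /\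
    heat (r - tgrid l r P i) (a1 - X) * kap <=
    (b - a) * (heat (tgrid l r P i.+1 - tgrid l r P i) (y - X) *
               heat (r - tgrid l r P i.+1) (a1 - y)).

Definition row_coords (j i n : nat) : seq (nat * nat) := [seq (j, i') | i' <- iota i n].

Definition rows_coords (j n : nat) : seq (nat * nat) :=
  flatten [seq row_coords j' 0 (size P) | j' <- iota j n].

Lemma xgrid_last x j : xgrid P am ap x j (size P).+1 = ap j.
Proof. by rewrite /xgrid /= ltnn. Qed.

Lemma xgrid_S x j i : (i < size P)%N -> xgrid P am ap x j i.+1 = x j i.
Proof. by move=> iP; rewrite /xgrid /= iP. Qed.

Lemma xgrid_upd_le x j i y n : (n <= i)%N ->
  xgrid P am ap (upd x j i y) j n = xgrid P am ap x j n.
Proof.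
move=> ni; rewrite /xgrid; case: ifP => // n0; case: ifP => // _.
rewrite upd_neq_point //; case: n ni n0 => // n /= ni _.
by rewrite neq_ltn ni.
Qed.

Lemma xgrid_upd_neq x j i y j' : j' != j ->
  xgrid P am ap (upd x j i y) j' = xgrid P am ap x j'.
Proof. by move=> j'j; apply/funext => n; rewrite /xgrid upd_neq_curve. Qed.

Lemma bridge_density_upd_neq x j i y j' : j' != j ->
  bridge_density l r P am ap (upd x j i y) j' = bridge_density l r P am ap x j'.
Proof. by move=> j'j; rewrite /bridge_density xgrid_upd_neq. Qed.

Lemma bridge_density_ge0 x j : 0 <= bridge_density l r P am ap x j.
Proof.
rewrite /bridge_density divr_ge0 ?heat_ge0 //.
by apply: prodr_ge0 => i _; exact: heat_ge0.
Qed.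

Lemma partial_density0 x j : partial_density x j 0 = 1.
Proof.
rewrite /partial_density big_ord0 mul1r /tgrid /xgrid /= divff //.
by rewrite gt_eqF // heat_gt0 // subr_gt0.
Qed.

Lemma partial_density_last x j :
  partial_density x j (size P) = bridge_density l r P am ap x j.
Proof. by rewrite /partial_density /bridge_density big_ord_recr /= tgrid_last xgrid_last. Qed.

Lemma partial_density_upd x j i y : (i < size P)%N ->
  partial_density (upd x j i y) j i.+1 =
  (\prod_(i' < i) heat (tgrid l r P i'.+1 - tgrid l r P i')
                       (xgrid P am ap x j i'.+1 - xgrid P am ap x j i'))
  * (heat (tgrid l r P i.+1 - tgrid l r P i) (y - xgrid P am ap x j i)
  * heat (r - tgrid l r P i.+1) (ap j - y)) / heat (r - l) (ap j - am j).
Proof.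
move=> iP; rewrite /partial_density big_ord_recr /= xgrid_S // upd_eq xgrid_upd_le //.
rewrite -!mulrA; congr (_ * _); apply: eq_bigr => i' _.
by rewrite !xgrid_upd_le // ltnW.
Qed.

Lemma partial_density_step x j i (kap a b y : R) : (i < size P)%N -> a < b ->
  heat (r - tgrid l r P i) (ap j - xgrid P am ap x j i) * kap <=
    (b - a) * (heat (tgrid l r P i.+1 - tgrid l r P i) (y - xgrid P am ap x j i) *
               heat (r - tgrid l r P i.+1) (ap j - y)) ->
  partial_density x j i * kap / (b - a) <= partial_density (upd x j i y) j i.+1.
Proof.
move=> iP ab hk; rewrite partial_density_upd // /partial_density.
set pre := \prod_(i' < i) _; set Z := heat (r - l) _.
set H := heat (r - _) _; set hh := heat _ _ * heat _ _.
have pre0 : 0 <= pre by apply: prodr_ge0 => i' _; exact: heat_ge0.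
have preZ0 : 0 <= pre / Z by rewrite divr_ge0 ?heat_ge0.
rewrite (_ : _ / (b - a) = pre / Z * (H * kap / (b - a))); last by ring.
rewrite (_ : pre * hh / Z = pre / Z * hh); last by ring.
by apply: ler_wpM2l => //; rewrite ler_pdivrMr ?subr_gt0 // [hh * _]mulrC.
Qed.

(* [A] and [O] carry the density and the constraints of the other curves,
   which the values of curve [j] do not affect. *)
Lemma iint_row_ge (j : nat) (G : config R -> \bar R) (A : config R -> R)
    (O : config R -> Prop) (B : nat -> R -> Prop) (kap : nat -> R) :
  (forall x i y, A (upd x j i y) = A x) -> (forall x, 0 <= A x) ->
  (forall x i y, O x -> O (upd x j i y)) -> (forall x, (0 <= G x)%E) ->
  (forall x, O x -> (forall i, (i <= size P)%N -> B i (xgrid P am ap x j i)) ->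
     ((A x * bridge_density l r P am ap x j)%:E <= G x)%E) ->
  (forall i, 0 <= kap i) ->
  (forall i X, (i < size P)%N -> B i X -> step_window (ap j) (B i.+1) (kap i) i X) ->
  forall n i x, (i + n = size P)%N -> O x ->
  (forall i', (i' <= i)%N -> B i' (xgrid P am ap x j i')) ->
  ((A x * partial_density x j i * \prod_(i <= i' < size P) kap i')%:E
     <= iint (row_coords j i n) G x)%E.
Proof.
move=> Aupd A0 Oupd G0 HG kap0 Hstep.
elim=> [|n IH] i x; rewrite ?addn0 => inP Ox Bx.
  by subst i; rewrite big_geq // mulr1 partial_density_last; exact: HG.
have iP : (i < size P)%N by rewrite -inP; lia.
have [a [b [ab win]]] := Hstep i _ iP (Bx i (leqnn i)).
rewrite big_ltn //=; set K := \prod_(i.+1 <= i' < size P) kap i'.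
have K0 : 0 <= K by apply: prodr_ge0.
have Q0 : 0 <= partial_density x j i.
  rewrite /partial_density divr_ge0 ?mulr_ge0 ?heat_ge0 //.
  by apply: prodr_ge0 => i' _; exact: heat_ge0.
rewrite (_ : _ * _ = A x * K * (partial_density x j i * kap i / (b - a)) * (b - a));
  last by field; rewrite subr_eq0 gt_eqF.
apply: integral_ge_itv => //; first by move=> y; exact: iint_ge0.
  apply: mulr_ge0; first exact: mulr_ge0.
  by apply: divr_ge0; [exact: mulr_ge0 | rewrite subr_ge0 ltW].
move=> y /win [By hy]; apply: le_trans (IH i.+1 _ _ _ _); last 3 first.
- by rewrite -inP addSnnS.
- exact: Oupd.
- move=> i'; rewrite leq_eqVlt => /orP [/eqP ->|]; first by rewrite xgrid_S // upd_eq.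
  by rewrite ltnS => i'i; rewrite xgrid_upd_le //; exact: Bx.
rewrite lee_fin Aupd -/K mulrAC.
by apply: ler_wpM2r => //; apply: ler_wpM2l => //; exact: partial_density_step.
Qed.

Lemma iint_rows_ge (k : nat) (F : config R -> \bar R) (B : nat -> nat -> R -> Prop)
    (kap : nat -> R) :
  (forall x, (0 <= F x)%E) ->
  (forall x, (forall j i, (1 <= j <= k)%N -> (i <= size P)%N ->
       B j i (xgrid P am ap x j i)) ->
     ((\prod_(1 <= j < k.+1) bridge_density l r P am ap x j)%:E <= F x)%E) ->
  (forall i, 0 <= kap i) ->
  (forall j, (1 <= j <= k)%N -> B j 0%N (am j)) ->
  (forall j i X, (1 <= j <= k)%N -> (i < size P)%N -> B j i X ->
     step_window (ap j) (B j i.+1) (kap i) i X) ->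
  forall n j x, (0 < j)%N -> (j + n = k.+1)%N ->
  (forall j' i, (1 <= j' < j)%N -> (i <= size P)%N -> B j' i (xgrid P am ap x j' i)) ->
  (((\prod_(1 <= j' < j) bridge_density l r P am ap x j') *
     (\prod_(0 <= i < size P) kap i) ^+ n)%:E <= iint (rows_coords j n) F x)%E.
Proof.
move=> F0 HF kap0 B0 Hstep.
elim=> [|n IH] j x j0; rewrite ?addn0 => jn Bx.
  subst j; rewrite expr0 mulr1; apply: HF => j' i /andP [j1 jk].
  by apply: Bx; rewrite j1 ltnS.
have jk : (1 <= j <= k)%N by apply/andP; split; lia.
rewrite /rows_coords /= -/(rows_coords j.+1 n) -iint_cat.
set K := \prod_(0 <= i < size P) kap i.
set A := fun x => (\prod_(1 <= j' < j) bridge_density l r P am ap x j') * K ^+ n.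
have K0 : 0 <= K by apply: prodr_ge0.
rewrite (_ : _ * _ = A x * partial_density x j 0 * K);
  last by rewrite partial_density0 mulr1 /A exprSr mulrA.
apply: (iint_row_ge (O := fun x => forall j' i, (1 <= j' < j)%N -> (i <= size P)%N ->
    B j' i (xgrid P am ap x j' i))) => //.
- move=> x' i y; rewrite /A; congr (_ * _); apply: eq_big_nat => j' /andP [_ j'j].
  by rewrite bridge_density_upd_neq // ltn_eqF.
- move=> x'; rewrite /A mulr_ge0 ?exprn_ge0 //.
  by apply: prodr_ge0 => j' _; exact: bridge_density_ge0.
- move=> x' i y Ox j' i' /[dup] /andP [_ j'j] jj i'P.
  by rewrite xgrid_upd_neq ?ltn_eqF //; exact: Ox.
- by move=> x'; exact: iint_ge0.
- move=> x' Ox Bj; apply: le_trans (IH j.+1 x' isT _ _); last first.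
  + move=> j' i /andP [j1]; rewrite ltnS leq_eqVlt => /orP [/eqP ->|jj]; first exact: Bj.
    by apply: Ox; rewrite j1 jj.
  + by rewrite -jn addSnnS.
  by rewrite lee_fin /A big_nat_recr //= -mulrA [K ^+ n * _]mulrC mulrA.
- by move=> i X; exact: Hstep.
- by move=> i'; rewrite leqn0 => /eqP ->; rewrite /xgrid /=; exact: B0.
Qed.

End BridgeChain.

(* The tent keeps the target above any [L]-Lipschitz function vanishing at [l]
   and [r]; its concavity costs only a drift of order [L] per unit time. *)
Definition target (l r L a0 a1 t : R) : R :=
  a0 + (a1 - a0) * ((t - l) / (r - l)) + L * Num.min (t - l) (r - t).

Lemma min_dist_lipschitz (l r a b : R) : a <= b ->
  `|Num.min (a - l) (r - a) - Num.min (b - l) (r - b)| <= b - a.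
Proof.
by move=> ab; rewrite /Num.min; do 2 case: ltP => ?; rewrite ler_norml; apply/andP; split; lra.
Qed.

Lemma target_drift (l r L a0 a1 t0 t1 : R) : l <= t0 -> t0 < t1 -> t1 < r -> 0 <= L ->
  `|target l r L a0 a1 t0 + (t1 - t0) * (a1 - target l r L a0 a1 t0) / ((t1 - t0) + (r - t1))
      - target l r L a0 a1 t1|
    <= 2 * L * ((t1 - t0) * (r - t1) / ((t1 - t0) + (r - t1))).
Proof.
move=> lt0 t01 t1r L0.
set h0 := L * Num.min (t0 - l) (r - t0); set h1 := L * Num.min (t1 - l) (r - t1).
have V0 : 0 < (t1 - t0) + (r - t1) by lra.
rewrite (_ : _ - _ = ((r - t1) * (h0 - h1) - (t1 - t0) * h1) / ((t1 - t0) + (r - t1)));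
  last by rewrite /target -/h0 -/h1; field; rewrite !gt_eqF // subr_gt0 //; lra.
rewrite normrM (gtr0_norm (_ : 0 < _^-1)) ?invr_gt0 // mulrA ler_pM2r ?invr_gt0 //.
have hl : `|h0 - h1| <= L * (t1 - t0).
  by rewrite -mulrBr normrM (ger0_norm L0) ler_wpM2l // min_dist_lipschitz // ltW.
have h10 : 0 <= h1 by apply: mulr_ge0 => //; rewrite /Num.min; case: ifP => _; lra.
have h1S : h1 <= L * (r - t1).
  by apply: ler_wpM2l => //; rewrite /Num.min; case: ltP => h; lra.
apply: le_trans (ler_normB _ _) _.
have rt1 : 0 <= r - t1 by lra.
have t10 : 0 <= t1 - t0 by lra.
rewrite (normrM (r - t1)) (normrM (t1 - t0)) (ger0_norm h10) (ger0_norm rt1) (ger0_norm t10).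
have := ler_wpM2l rt1 hl.
have : (t1 - t0) * h1 <= (t1 - t0) * (L * (r - t1)) by rewrite ler_wpM2l //; lra.
lra.
Qed.

Section TargetTube.
Variables (l r L : R).
Hypothesis lr : l < r.

Lemma target_left (a0 a1 : R) : target l r L a0 a1 l = a0.
Proof.
rewrite /target subrr mul0r mulr0 addr0.
by rewrite (_ : Num.min 0 (r - l) = 0) ?mulr0 ?addr0 //; apply/min_idPl; rewrite subr_ge0 ltW.
Qed.

Lemma target_gap (a0 a1 b0 b1 e t : R) : l <= t <= r ->
  e <= a0 - b0 -> e <= a1 - b1 -> e <= target l r L a0 a1 t - target l r L b0 b1 t.
Proof.
move=> /andP [lt tr] e0 e1; set s := (t - l) / (r - l).
have s0 : 0 <= s by apply: divr_ge0; rewrite subr_ge0 // ltW.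
have s1 : s <= 1 by rewrite ler_pdivrMr ?subr_gt0 // mul1r; lra.
rewrite (_ : _ - _ = (a0 - b0) * (1 - s) + (a1 - b1) * s); last by rewrite /target -/s; ring.
nra.
Qed.

Lemma target_above (g : R -> R) (a0 a1 e t : R) : l <= t <= r -> g l = 0 -> g r = 0 ->
  (forall x y, l <= x <= r -> l <= y <= r -> `|g x - g y| <= L * `|x - y|) ->
  e <= a0 - g l -> e <= a1 - g r -> e <= target l r L a0 a1 t - g t.
Proof.
move=> tlr gl gr glip e0 e1; have /andP [lt tr] := tlr.
have gt : g t <= L * Num.min (t - l) (r - t).
  have hl : `|g t - g l| <= L * `|t - l| by apply: glip; rewrite ?lexx ?lt ?tr ?(ltW lr).
  have hr : `|g t - g r| <= L * `|r - t|.
    by rewrite (distrC r); apply: glip; rewrite ?lexx ?lt ?tr ?(ltW lr).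
  rewrite gl gr !subr0 in hl hr.
  rewrite (ger0_norm (_ : 0 <= t - l)) ?subr_ge0 // in hl.
  rewrite (ger0_norm (_ : 0 <= r - t)) ?subr_ge0 // in hr.
  by rewrite /Num.min; case: ifP => _; exact: le_trans (ler_norm _) _.
rewrite gl gr in e0 e1.
have := @target_gap a0 a1 0 0 e t tlr e0 e1.
rewrite [target _ _ _ 0 0 t]/target subrr !mul0r !add0r; lra.
Qed.

End TargetTube.

Lemma shrunk_center (th u d w : R) : 0 <= th <= 1 -> 0 < w <= d -> `|u| <= d ->
  `|th * u * (1 - w / (2 * d))| <= d - w / 2 /\
  `|th * u * (1 - w / (2 * d)) - th * u| <= w / 2.
Proof.
move=> /andP [th0 th1] /andP [w0 wd] ud.
have d0 : 0 < d by apply: lt_le_trans wd.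
have thud : `|th * u| <= d.
  by rewrite normrM (ger0_norm th0); apply: le_trans ud; rewrite ler_piMl.
have s0 : 0 <= w / (2 * d) by rewrite divr_ge0 ?ltW ?mulr_gt0.
have s1 : w / (2 * d) <= 1 by rewrite ler_pdivrMr ?mulr_gt0 //; lra.
split.
  rewrite normrM (ger0_norm (_ : 0 <= 1 - w / (2 * d))) ?subr_ge0 //.
  rewrite (_ : d - w / 2 = d * (1 - w / (2 * d))); last by field; rewrite lt0r_neq0.
  by rewrite ler_wpM2r ?subr_ge0.
rewrite (_ : _ - _ = - (th * u * (w / (2 * d)))); last by ring.
rewrite normrN normrM (ger0_norm s0).
rewrite (_ : w / 2 = d * (w / (2 * d))); last by field; rewrite lt0r_neq0.
exact: ler_wpM2r.
Qed.

Lemma bridge_window (t S X a Y0 Y1 d L th : R) :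
  0 < t -> 0 < S -> 0 <= L -> 0 < d -> 0 < th <= 1 -> th * Num.sqrt t <= d ->
  `|X - Y0| <= d ->
  `|Y0 + t * (a - Y0) / (t + S) - Y1| <= 2 * L * (t * S / (t + S)) ->
  exists u v, u < v /\ forall y, u <= y <= v -> `|y - Y1| <= d /\
    heat (t + S) (a - X) * (th * expR (- 1 - 4 * L ^+ 2 * t) / Num.sqrt (2 * pi)) <=
    (v - u) * (heat t (y - X) * heat S (a - y)).
Proof.
move=> t0 S0 L0 d0 /andP [th0 th1] thd hX hD.
have tS0 : 0 < t + S by rewrite addr_gt0.
set s := t * S / (t + S) in hD *.
have s0 : 0 < s by apply: divr_gt0 => //; exact: mulr_gt0.
have st : s <= t.
  by rewrite /s ler_pdivrMr //; apply: ler_wpM2l; [exact: ltW | rewrite lerDr ltW].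
set w := Num.min (Num.sqrt s) d.
have w0 : 0 < w by rewrite lt_min sqrtr_gt0 s0 d0.
have wd : w <= d by rewrite ge_min lexx orbT.
have ws : w <= Num.sqrt s by rewrite ge_min lexx.
have thw : th * Num.sqrt s <= w.
  rewrite le_min ger_pMl ?sqrtr_gt0 // th1 /=.
  apply: le_trans thd; apply: ler_wpM2l; first exact: ltW.
  by rewrite ler_sqrt // ltW.
have q01 : 0 <= S / (t + S) <= 1.
  apply/andP; split; first by apply: divr_ge0; exact: ltW.
  by rewrite ler_pdivrMr // mul1r lerDr ltW.
have [hc hcm] := shrunk_center q01 (ltac:(by rewrite w0 wd) : 0 < w <= d) hX.
(* The window of width [w] is centred between the target [Y1] and the bridge
   mean, pulled towards [Y1] just enough to stay inside the tube. *)
set c := Y1 + S / (t + S) * (X - Y0) * (1 - w / (2 * d)).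
exists (c - w / 2), (c + w / 2); split; first lra.
move=> y /andP [ya yb]; have hyc : `|y - c| <= w / 2 by rewrite ler_norml; lra.
split.
  rewrite (_ : y - Y1 = (y - c) + S / (t + S) * (X - Y0) * (1 - w / (2 * d))); last first.
    by rewrite /c; ring.
  by apply: le_trans (ler_normD _ _) _; lra.
have hmean : `|y - (X + t * (a - X) / (t + S))| <= Num.sqrt s + 2 * L * s.
  rewrite (_ : y - _ = (y - c) + (S / (t + S) * (X - Y0) * (1 - w / (2 * d))
     - S / (t + S) * (X - Y0)) - (Y0 + t * (a - Y0) / (t + S) - Y1)); last first.
    by rewrite /c; field; rewrite !gt_eqF.
  apply: le_trans (ler_normB _ _) _; apply: le_trans (lerD (ler_normD _ _) (lexx _)) _.
  lra.
have := heat_bridge_ge t0 S0 L0 hmean; rewrite -/s.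
rewrite (_ : c + w / 2 - (c - w / 2) = w); last by field.
have sq2pi : 0 < Num.sqrt (2 * pi : R) by rewrite sqrtr_gt0 mulr_gt0 // pi_gt0.
have sqs : 0 < Num.sqrt s by rewrite sqrtr_gt0.
set E := expR _ => hG.
rewrite (_ : heat _ _ * _ =
    heat (t + S) (a - X) * (E / (Num.sqrt (2 * pi) * Num.sqrt s)) * (th * Num.sqrt s));
  last by field; rewrite !gt_eqF.
rewrite [w * _]mulrC; apply: ler_pM => //.
- apply: mulr_ge0; first exact: heat_ge0.
  by apply: divr_ge0; [exact: expR_ge0 | apply: mulr_ge0; exact: ltW].
- by apply: mulr_ge0; exact: ltW.
Qed.

Section TargetStep.
Variables (l r : R) (P : seq R).
Hypotheses (lr : l < r) (sP : sorted <%R P) (Plr : forall p, p \in P -> l < p < r).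

Lemma target_step (h L d th a0 a1 X : R) (i : nat) :
  (forall p, p \in P -> p < l + h) ->
  0 <= L -> 0 < d -> 0 < th <= 1 -> th * Num.sqrt h <= d -> (i < size P)%N ->
  `|X - target l r L a0 a1 (tgrid l r P i)| <= d ->
  step_window l r P a1 (fun y => `|y - target l r L a0 a1 (tgrid l r P i.+1)| <= d)
    (th * expR (- 1 - 4 * L ^+ 2 * (tgrid l r P i.+1 - tgrid l r P i)) / Num.sqrt (2 * pi))
    i X.
Proof.
move=> Ph L0 d0 th01 thd iP hX.
set t0 := tgrid l r P i; set t1 := tgrid l r P i.+1.
have t01 : t0 < t1 by apply: tgrid_lt => //; exact: ltnW.
have lt0 : l <= t0 by apply: tgrid_ge => //; rewrite ltnW // ltnW.
have t1P : t1 \in P by rewrite /t1 tgrid_S // mem_nth.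
have /andP [_ t1r] := Plr t1P; have t1h := Ph _ t1P.
have thd' : th * Num.sqrt (t1 - t0) <= d.
  apply: le_trans thd; apply: ler_wpM2l; first by case/andP: th01 => /ltW.
  by rewrite ler_sqrt; lra.
have t_gt0 : 0 < t1 - t0 by rewrite subr_gt0.
have S_gt0 : 0 < r - t1 by rewrite subr_gt0.
have := bridge_window t_gt0 S_gt0 L0 d0 th01 thd' hX (target_drift a0 a1 lt0 t01 t1r L0).
by rewrite (_ : t1 - t0 + (r - t1) = r - t0) //; ring.
Qed.

End TargetStep.

Lemma eventH_of_tube (k : nat) (mu lam0 lam1 T L d l r : R)
    (am ap : nat -> R) (g : R -> R) (P : seq R) (x : config R) :
  (1 <= k)%N -> l < r -> (forall p, p \in P -> l < p < r) -> g l = 0 -> g r = 0 ->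
  (forall x y, l <= x <= r -> l <= y <= r -> `|g x - g y| <= L * `|x - y|) ->
  (forall j, (1 <= j < k)%N -> lam0 * Num.sqrt T <= am j - am j.+1) ->
  (forall j, (1 <= j < k)%N -> lam0 * Num.sqrt T <= ap j - ap j.+1) ->
  lam1 * T <= am k - g l -> lam1 * T <= ap k - g r ->
  2 * d <= (1 - mu) * lam0 * Num.sqrt T -> d <= (1 - mu) * lam1 * T ->
  (forall j i, (1 <= j <= k)%N -> (i < size P)%N ->
     `|x j i - target l r L (am j) (ap j) (nth 0 P i)| <= d) ->
  eventH k mu lam0 lam1 T g P x.
Proof.
move=> k1 lr Plr gl gr glip Ham Hap Hamk Hapk hd0 hd1 Hx.
apply/allP => i; rewrite mem_iota add0n => /andP [_ iP].
have /andP [lp pr] := Plr _ (mem_nth 0 iP).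
have pI : l <= nth 0 P i <= r by rewrite !ltW.
apply/andP; split.
  apply/allP => j; rewrite mem_iota => /andP [j1 jk].
  have jk' : (1 <= j < k)%N by apply/andP; split; lia.
  have := target_gap L lr pI (Ham j jk') (Hap j jk').
  have := Hx j i (ltac:(apply/andP; split; lia)) iP.
  have := Hx j.+1 i (ltac:(apply/andP; split; lia)) iP.
  by rewrite !ler_norml => /andP [? ?] /andP [? ?]; lra.
have := target_above lr pI gl gr glip Hamk Hapk.
have := Hx k i (ltac:(by rewrite k1 leqnn)) iP.
by rewrite ler_norml => /andP [? ?]; lra.
Qed.

Lemma Pfree_H_ge_tube (k : nat) (mu lam0 lam1 T L d th h l r : R)
    (am ap : nat -> R) (g : R -> R) (P : seq R) :
  (1 <= k)%N -> l < r -> sorted <%R P -> (forall p, p \in P -> l < p < r) ->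
  (forall p, p \in P -> p < l + h) -> g l = 0 -> g r = 0 ->
  (forall x y, l <= x <= r -> l <= y <= r -> `|g x - g y| <= L * `|x - y|) ->
  (forall j, (1 <= j < k)%N -> lam0 * Num.sqrt T <= am j - am j.+1) ->
  (forall j, (1 <= j < k)%N -> lam0 * Num.sqrt T <= ap j - ap j.+1) ->
  lam1 * T <= am k - g l -> lam1 * T <= ap k - g r ->
  0 <= L -> 0 < d -> 0 < th <= 1 -> th * Num.sqrt h <= d ->
  2 * d <= (1 - mu) * lam0 * Num.sqrt T -> d <= (1 - mu) * lam1 * T ->
  (((\prod_(0 <= i < size P)
       (th * expR (- 1 - 4 * L ^+ 2 * (tgrid l r P i.+1 - tgrid l r P i)) / Num.sqrt (2 * pi)))
     ^+ k)%:E <= Pfree_H k l r am ap mu lam0 lam1 T g P)%E.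
Proof.
move=> k1 lr sP Plr Ph gl gr glip Ham Hap Hamk Hapk L0 d0 th01 thd hd0 hd1.
have /andP [th0 _] := th01.
pose F (x : config R) := (if eventH k mu lam0 lam1 T g P x
  then \prod_(1 <= j < k.+1) bridge_density l r P am ap x j else 0)%:E.
pose B j i v : Prop := `|v - target l r L (am j) (ap j) (tgrid l r P i)| <= d.
have F0 x : (0 <= F x)%E.
  by rewrite /F lee_fin; case: ifP => // _; apply: prodr_ge0 => j _; exact: bridge_density_ge0.
have HF x : (forall j i, (1 <= j <= k)%N -> (i <= size P)%N -> B j i (xgrid P am ap x j i)) ->
    ((\prod_(1 <= j < k.+1) bridge_density l r P am ap x j)%:E <= F x)%E.
  move=> Bx; rewrite /F (@eventH_of_tube k mu lam0 lam1 T L d l r am ap g P x) //.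
  move=> j i jk iP; have := Bx j i.+1 jk iP.
  by rewrite /B xgrid_S // tgrid_S.
have kap0 i : 0 <= th * expR (- 1 - 4 * L ^+ 2 * (tgrid l r P i.+1 - tgrid l r P i))
    / Num.sqrt (2 * pi).
  by apply: divr_ge0; [apply: mulr_ge0; [exact: ltW | exact: expR_ge0] | exact: sqrtr_ge0].
have B0 j : (1 <= j <= k)%N -> B j 0%N (am j).
  by move=> _; rewrite /B /tgrid /= target_left // subrr normr0 ltW.
have B_none j' i : (1 <= j' < 1)%N -> (i <= size P)%N ->
    B j' i (xgrid P am ap (fun _ _ => 0) j' i).
  by move=> /andP [j1 j'1]; exfalso; lia.
have Bstep j i X : (1 <= j <= k)%N -> (i < size P)%N -> B j i X ->
    step_window l r P (ap j) (B j i.+1)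
      (th * expR (- 1 - 4 * L ^+ 2 * (tgrid l r P i.+1 - tgrid l r P i)) / Num.sqrt (2 * pi))
      i X.
  by move=> _ iP BX; apply: (target_step lr sP Plr Ph L0 d0 th01 thd iP BX).
have := iint_rows_ge lr F0 HF kap0 B0 Bstep (j := 1%N) (x := fun _ _ => 0) isT (add1n k) B_none.
by rewrite big_geq // mul1r; apply.
Qed.

Lemma prod_step_factor (th L : R) (f : nat -> R) (n : nat) :
  \prod_(0 <= i < n) (th * expR (- 1 - 4 * L ^+ 2 * (f i.+1 - f i)) / Num.sqrt (2 * pi)) =
  (th * expR (- 1) / Num.sqrt (2 * pi)) ^+ n * expR (- (4 * L ^+ 2 * (f n - f 0%N))).
Proof.
elim: n => [|n IH]; first by rewrite big_geq // expr0 subrr mulr0 oppr0 expR0 mulr1.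
rewrite big_nat_recr //= IH [_ ^+ n.+1]exprSr.
have -> : expR (- 1 - 4 * L ^+ 2 * (f n.+1 - f n)) =
    expR (- 1) * expR (- (4 * L ^+ 2 * (f n.+1 - f n))) by rewrite -expRD; congr expR; ring.
have -> : expR (- (4 * L ^+ 2 * (f n.+1 - f 0%N))) =
    expR (- (4 * L ^+ 2 * (f n - f 0%N))) * expR (- (4 * L ^+ 2 * (f n.+1 - f n))).
  by rewrite -expRD; congr expR; ring.
ring.
Qed.

Lemma step_constant_in01 (th : R) : 0 < th <= 1 ->
  0 < th * expR (- 1) / Num.sqrt (2 * pi) <= 1.
Proof.
move=> /andP [th0 th1]; have pi2 := pi_ge2 R.
have s2pi : 1 <= Num.sqrt (2 * pi : R) by rewrite -{1}sqrtr1 ler_sqrt; lra.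
have e1 : expR (- 1) <= 1 :> R by rewrite expR_le1; lra.
have e0 := expR_gt0 (- 1 : R).
rewrite divr_gt0 ?mulr_gt0 //=; last lra.
rewrite ler_pdivrMr ?mul1r; last lra.
nra.
Qed.

Lemma sqrtr_le_id (x : R) : 1 <= x -> Num.sqrt x <= x.
Proof.
move=> x1; have s1 : 1 <= Num.sqrt x by rewrite -{1}sqrtr1 ler_sqrt //; lra.
by rewrite -{2}(sqr_sqrtr (_ : 0 <= x)) ?expr2 ?ler_peMl //; lra.
Qed.

Lemma tube_mass_bound (k : nat) (b0 b1 c : R) :
  0 < c <= 1 -> 0 < b0 ->
  exists2 C : R, 0 < C & forall (T tm : R) (m : nat),
    1 <= T -> m%:R <= b0 * T -> 0 <= tm <= Num.sqrt T ->
    C^-1 * expR (- (C * (T ^+ 2 * Num.sqrt T)))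
      <= (c ^+ m * expR (- (4 * (b1 * T) ^+ 2 * tm))) ^+ k.
Proof.
move=> /andP [c0 c1] b00.
have lnc : ln c <= 0 by rewrite ln_le0.
have k0 : 0 <= k%:R :> R by [].
pose C := 1 + k%:R * b0 * - ln c + 4 * k%:R * b1 ^+ 2.
have C1 : 1 <= C.
  have : 0 <= k%:R * b0 * - ln c.
    by apply: mulr_ge0; [apply: mulr_ge0 => //; exact: ltW | rewrite oppr_ge0].
  have : 0 <= 4 * k%:R * b1 ^+ 2 by apply: mulr_ge0; [exact: mulr_ge0 | exact: sqr_ge0].
  rewrite /C; lra.
exists C; first lra.
move=> T tm m T1 mT /andP [tm0 tmT].
have sT1 : 1 <= Num.sqrt T by rewrite -sqrtr1 ler_sqrt //; lra.
set Q := T ^+ 2 * Num.sqrt T.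
have TQ : T <= Q.
  have : T ^+ 2 <= Q by rewrite /Q -[leLHS]mulr1; apply: ler_wpM2l; first exact: sqr_ge0.
  have : T <= T ^+ 2 by rewrite expr2 -[leLHS]mul1r; apply: ler_wpM2r; lra.
  lra.
have T2tm : T ^+ 2 * tm <= Q by rewrite /Q ler_wpM2l ?sqr_ge0.
rewrite -[c ^+ m]lnK ?posrE ?exprn_gt0 // lnXn // -expRD -expRM_natl.
apply: le_trans (_ : expR (- (C * Q)) <= _).
  by rewrite -[leRHS]mul1r ler_wpM2r ?expR_ge0 // invf_le1 //; lra.
rewrite ler_expR.
have hm : b0 * Q * ln c <= m%:R * ln c.
  by rewrite ler_wnM2r // (le_trans mT) // ler_wpM2l // ltW.
have hb : b1 ^+ 2 * (T ^+ 2 * tm) <= b1 ^+ 2 * Q by rewrite ler_wpM2l ?sqr_ge0.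
rewrite (_ : k%:R * _ = k%:R * (m%:R * ln c) - 4 * k%:R * (b1 ^+ 2 * (T ^+ 2 * tm)));
  last by rewrite -mulr_natl; ring.
have : k%:R * (b0 * Q * ln c) <= k%:R * (m%:R * ln c) by rewrite ler_wpM2l.
have : k%:R * (b1 ^+ 2 * (T ^+ 2 * tm)) <= k%:R * (b1 ^+ 2 * Q) by rewrite ler_wpM2l.
rewrite /C; nra.
Qed.

End Tube.

Theorem mainTheorem3 (R : realType) (k : nat) (b0 b1 lam0 lam1 mu : R) :
  (1 <= k)%N -> 0 < b0 -> 0 < b1 -> 0 < lam0 -> 0 < lam1 -> 0 < mu < 1 ->
  exists C : R, 0 < C /\
  forall (b2 T l r : R) (am ap : nat -> R) (g : R -> R) (P : seq R),
    0 < b2 -> 10 <= T -> l < r ->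
    (* P is a finite set, listed in strictly increasing order *)
    sorted <%R P ->
    (forall p, p \in P -> l < p < l + Num.sqrt T) ->
    (forall p, p \in P -> l < p < r) ->
    g l = 0 -> g r = 0 ->
    r - l <= b0 * T ->
    (size P)%:R <= b0 * T ->
    (forall x y, l <= x <= r -> l <= y <= r -> `|g x - g y| <= b1 * T * `|x - y|) ->
    (forall j, (1 <= j < k)%N -> lam0 * Num.sqrt T <= am j - am j.+1) ->
    (forall j, (1 <= j < k)%N -> lam0 * Num.sqrt T <= ap j - ap j.+1) ->
    lam1 * T <= am k - g l ->
    lam1 * T <= ap k - g r ->
    am 1%N - g l <= b2 * T ^+ 2 ->
    ap 1%N - g r <= b2 * T ^+ 2 ->
    ((C^-1 * expR (- (C * (T ^+ 2 * Num.sqrt T))))%:E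
       <= Pfree_H k l r am ap mu lam0 lam1 T g P)%E.
Proof.
move=> k1 b00 b10 lam00 lam10 /andP [mu0 mu1].
pose eps := Num.min ((1 - mu) * lam0 / 2) ((1 - mu) * lam1).
pose th := Num.min 1 eps.
have eps0 : 0 < eps by rewrite lt_min !mulr_gt0 ?subr_gt0.
have th01 : 0 < th <= 1 by rewrite lt_min ltr01 eps0 ge_min lexx.
have [C C0 HC] := tube_mass_bound k b1 (step_constant_in01 th01) b00.
exists C; split => // b2 T l r am ap g P _ T10 lr sP Psl Plr gl gr _ mP glip Ham Hap Hamk Hapk _ _.
have T1 : 1 <= T by lra.
have sT1 : 1 <= Num.sqrt T by rewrite -{1}sqrtr1 ler_sqrt //; lra.
have sTT := sqrtr_le_id T1.
have Psl' p : p \in P -> p < l + Num.sqrt T by move=> /Psl /andP [].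
have L0 : 0 <= b1 * T by apply: mulr_ge0; lra.
have d0 : 0 < eps * Num.sqrt T by apply: mulr_gt0; lra.
have /andP [th0 _] := th01.
have thd : th * Num.sqrt (Num.sqrt T) <= eps * Num.sqrt T.
  apply: ler_pM; [lra | exact: sqrtr_ge0 | by rewrite ge_min lexx orbT | exact: sqrtr_le_id].
have hd0 : 2 * (eps * Num.sqrt T) <= (1 - mu) * lam0 * Num.sqrt T.
  rewrite mulrA; apply: ler_wpM2r; first lra.
  have : eps <= (1 - mu) * lam0 / 2 by rewrite ge_min lexx.
  lra.
have hd1 : eps * Num.sqrt T <= (1 - mu) * lam1 * T.
  by apply: ler_pM; [lra | exact: sqrtr_ge0 | rewrite ge_min lexx orbT | exact: sTT].
apply: le_trans (Pfree_H_ge_tube k1 lr sP Plr Psl' gl gr glip Ham Hap Hamk Hapk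
  L0 d0 th01 thd hd0 hd1).
rewrite lee_fin prod_step_factor; apply: HC => //; exact: tgrid_span.
Qed.
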